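(* (a) For any ultrafilter $x\in I$ and any $n\in\mathbb{N}$, there exists an ultrafilter $y\in\overline{L_n}$ such that $y\,\tilde{\mid}\,x$. (b) For any $n\in\mathbb{N}$ and any ultrafilter $x\in L_n^*$, there exists an ultrafilter $y\in I$ such that $x\,\tilde{\mid}\,y$. (c) There exist ultrafilters $x\in I$ and $y\in I$ such that $y\,\tilde{\mid}\,x$.
   Context: $\mathbb{N}=\{1,2,3,\dots\}$; $\beta\mathbb{N}$ is the set of ultrafilters on $\mathbb{N}$ (Stone–Čech compactification, naturals identified with principal ultrafilters). For $A\subseteq\mathbb{N}$, $\overline{A}=\{x\in\beta\mathbb{N}:A\in x\}$ and $A^*=\overline{A}\setminus A$. $P$ is the set of primes, $L_0=\{1\}$, $L_n=\{a_1\cdots a_n:a_i\in P\}$. $I=\bigcap_{i=0}^\infty\overline{\mathbb{N}\setminus L_i}$ (ultrafilters containing none of the $L_i$). For $x,y\in\beta\mathbb{N}$, $x\,\tilde{\mid}\,y$ iff for every $A\in x$ the set $\{k\in\mathbb{N}:\exists a\in A,\ a\mid k\}$ belongs to $y$. *)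

From mathcomp Require Import all_boot.
Set Implicit Arguments. Unset Strict Implicit. Unset Printing Implicit Defensive.

(* Subsets of N = {1,2,3,...} are encoded as predicates on nat; the
   ambient set N itself is [Npos]. *)
Definition Npos : nat -> Prop := fun k => 0 < k.

Definition Ncompl (A : nat -> Prop) : nat -> Prop := fun k => 0 < k /\ ~ A k.

Definition is_ultrafilter (x : (nat -> Prop) -> Prop) : Prop :=
  [/\ x Npos,
      ~ x (fun _ => False),
      (forall A B : nat -> Prop, x A -> (forall k, A k -> B k) -> x B),
      (forall A B : nat -> Prop, x A -> x B -> x (fun k => A k /\ B k))
    & (forall A : nat -> Prop, x A \/ x (Ncompl A))].

Definition principal (x : (nat -> Prop) -> Prop) (n : nat) : Prop :=
  forall A : nat -> Prop, x A <-> A n.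

Definition in_closure (A : nat -> Prop) (x : (nat -> Prop) -> Prop) : Prop :=
  is_ultrafilter x /\ x A.

(* A^* = closure A \ A  (A seen as set of principal ultrafilters, A ⊆ N) *)
Definition in_star (A : nat -> Prop) (x : (nat -> Prop) -> Prop) : Prop :=
  in_closure A x /\ ~ (exists n, 0 < n /\ A n /\ principal x n).

Fixpoint L (n : nat) : nat -> Prop :=
  match n with
  | 0 => fun k => k = 1
  | n'.+1 => fun k => exists p a, prime p /\ L n' a /\ k = p * a
  end.

Definition in_I (x : (nat -> Prop) -> Prop) : Prop :=
  is_ultrafilter x /\ forall i : nat, x (Ncompl (L i)).

Definition div_up (A : nat -> Prop) : nat -> Prop :=
  fun k => 0 < k /\ exists a, A a /\ (a %| k).

Definition tdiv (x y : (nat -> Prop) -> Prop) : Prop :=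
  forall A : nat -> Prop, x A -> y (div_up A).

(* (a) An ultrafilter in I contains, for every n, the set of numbers having at
   least n prime factors counted with multiplicity; choosing for each such k a
   divisor of k in L_n and pushing the ultrafilter forward along this choice
   gives an ultrafilter on L_n below it.
   (b), (c) Pushing a free ultrafilter forward along a |-> a * 2^a gives an
   ultrafilter above it, since a divides a * 2^a, and the pushforward lies in I,
   since a * 2^a has at least a prime factors. A member of L_n^* is free, and
   pushing forward twice from any free ultrafilter gives (c). *)
From mathcomp Require Import all_boot.
From mathcomp Require Import boolp filter.
Set Implicit Arguments. Unset Strict Implicit.

Section Ultrafilter.
Variable z : (nat -> Prop) -> Prop.
Hypothesis z_uf : is_ultrafilter z.

Lemma ultrafilterS (A B : nat -> Prop) : z A -> (forall k, A k -> B k) -> z B.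
Proof. by case: z_uf => _ _ zS _ _; apply: zS. Qed.

Lemma ultrafilterI (A B : nat -> Prop) : z A -> z B -> z (fun k => A k /\ B k).
Proof. by case: z_uf => _ _ _ zI _; apply: zI. Qed.

Lemma ultrafilter_principal (m : nat) : z (fun k => k = m) -> principal z m.
Proof.
move=> zm A; split=> [zA | Am]; last by apply: ultrafilterS zm _ => k ->.
apply: contrapT => nAm; case: z_uf => _ z0 _ _ _; apply: z0.
apply: ultrafilterS (ultrafilterI zA zm) _ => k [Ak km].
by apply: nAm; rewrite -km.
Qed.

End Ultrafilter.

Definition push (f : nat -> nat) (z : (nat -> Prop) -> Prop) :
  (nat -> Prop) -> Prop :=
  fun B => z (fun a => B (f a)).

Lemma push_ultrafilter f z :
  is_ultrafilter z -> z (fun a => 0 < f a) -> is_ultrafilter (push f z).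
Proof.
move=> z_uf zf; have [_ z0 _ _ zC] := z_uf.
rewrite /push; split=> /=; [exact: zf | exact: z0 | | |].
- by move=> A B zA AB; apply: (ultrafilterS z_uf zA) => k; apply: AB.
- by move=> A B; apply: (ultrafilterI z_uf).
- move=> A; case: (zC (fun a => A (f a))) => zA; [by left | right].
  by apply: (ultrafilterS z_uf (ultrafilterI z_uf zA zf)) => k [[_ nA] fk].
Qed.

Lemma tdiv_push_divisor f z : is_ultrafilter z ->
  z (fun k => 0 < k /\ f k %| k) -> tdiv (push f z) z.
Proof.
move=> z_uf zf A zA; apply: (ultrafilterS z_uf (ultrafilterI z_uf zA zf)).
by move=> k [Afk [k0 fk]]; split=> //; exists (f k).
Qed.

Lemma tdiv_push_multiple f z : is_ultrafilter z ->
  z (fun a => 0 < f a /\ a %| f a) -> tdiv z (push f z).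
Proof.
move=> z_uf zf A zA; apply: (ultrafilterS z_uf (ultrafilterI z_uf zA zf)).
by move=> a [Aa [fa0 afa]]; split=> //; exists a.
Qed.

Definition free (z : (nat -> Prop) -> Prop) : Prop :=
  forall i, z (fun a => i < a).

Lemma star_free A x : in_star A x -> free x.
Proof.
move=> [[x_uf xA] nprincipal]; elim=> [|i IH]; first by case: x_uf.
have [_ _ _ _ xC] := x_uf; case: (xC (fun a => i.+1 < a)) => // xle.
exfalso; apply: nprincipal; exists i.+1.
suff x_si : principal x i.+1 by split=> //; split=> //; apply/(x_si A).
apply: ultrafilter_principal => //.
apply: (ultrafilterS x_uf (ultrafilterI x_uf IH xle)).
by move=> k [ik [_ /negP]]; rewrite -leqNgt => ki; apply/eqP; rewrite eqn_leq ki.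
Qed.

Lemma exists_free_ultrafilter : exists z, is_ultrafilter z /\ free z.
Proof.
have [U [U_uf sub]] := ultraFilterLemma (@eventually_filter).
have U_free : free U by move=> i; apply: sub; exists i.+1.
have U_proper : ProperFilter U by case: U_uf.
exists U; split=> //; split; first exact: (U_free 0).
- exact: filter_not_empty.
- by move=> A B UA AB; apply: filterS UA.
- by move=> A B; apply: filterI.
- move=> A; case: (in_ultra_setVsetC A U_uf) => UA; [by left | right].
  by apply: filterS (filterI UA (U_free 0)) => k [nA k0].
Qed.

Lemma L_gt0 i d : L i d -> 0 < d.
Proof.
elim: i d => [d -> //|i IH d [p [a [p_pr [La ->]]]]].
by rewrite muln_gt0 prime_gt0 // IH.
Qed.

Lemma logn2_L i d : L i d -> logn 2 d <= i.
Proof.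
elim: i d => [d -> //|i IH d [p [a [p_pr [La ->]]]]].
rewrite lognM ?(prime_gt0 p_pr) ?(L_gt0 La) // (logn_prime 2 p_pr).
have := IH _ La; case: (2 == p) => IHa.
  by rewrite add1n ltnS.
by rewrite add0n leqW.
Qed.

Definition mul_exp2 (a : nat) : nat := a * 2 ^ a.

Lemma mul_exp2_gt0 a : (0 < mul_exp2 a) = (0 < a).
Proof. by rewrite muln_gt0 expn_gt0 andbT. Qed.

Lemma L_mul_exp2 i a : 0 < a -> L i (mul_exp2 a) -> a <= i.
Proof.
move=> a0 /logn2_L; rewrite lognM ?expn_gt0 // pfactorK //.
exact/leq_trans/leq_addl.
Qed.

Section PushMulExp2.
Variable z : (nat -> Prop) -> Prop.
Hypotheses (z_uf : is_ultrafilter z) (z_free : free z).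

Lemma push_mul_exp2_ultrafilter : is_ultrafilter (push mul_exp2 z).
Proof.
apply: push_ultrafilter => //.
by apply: (ultrafilterS z_uf (z_free 0)) => a; rewrite mul_exp2_gt0.
Qed.

Lemma push_mul_exp2_I : in_I (push mul_exp2 z).
Proof.
split=> [|i]; first exact: push_mul_exp2_ultrafilter.
apply: (ultrafilterS z_uf (z_free i)) => a ia.
have a0 : 0 < a by apply: leq_ltn_trans ia.
by split=> [|/(L_mul_exp2 a0)]; rewrite ?mul_exp2_gt0 // leqNgt ia.
Qed.

Lemma push_mul_exp2_free : free (push mul_exp2 z).
Proof.
move=> i; apply: (ultrafilterS z_uf (z_free i)) => a ia.
by apply: leq_trans ia _; rewrite leq_pmulr // expn_gt0.
Qed.

Lemma tdiv_push_mul_exp2 : tdiv z (push mul_exp2 z).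
Proof.
apply: tdiv_push_multiple => //; apply: (ultrafilterS z_uf (z_free 0)) => a a0.
by rewrite mul_exp2_gt0 a0 dvdn_mulr.
Qed.

End PushMulExp2.

Definition outside_L (n k : nat) : Prop := 0 < k /\ forall i, i < n -> ~ L i k.

Lemma I_outside_L x n : in_I x -> x (outside_L n).
Proof.
move=> [x_uf xI]; elim: n => [|n IH].
  by case: (x_uf) => xN _ _ _ _; apply: (ultrafilterS x_uf xN) => k k0; split.
apply: (ultrafilterS x_uf (ultrafilterI x_uf IH (xI n))) => k [[k0 Lk] [_ nLn]].
split=> // i; rewrite ltnS leq_eqVlt => /orP [/eqP -> //|]; exact: Lk.
Qed.

(* If k has a divisor d in L_n but k is not itself in L_n, then k %/ d > 1 and
   the least prime factor of k %/ d extends d to a divisor in L_(n+1). *)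
Lemma outside_L_divisor n k : outside_L n k -> exists2 d, L n d & d %| k.
Proof.
elim: n => [_|n IH [k0 nLk]]; first by exists 1.
have [|d Ld dk] := IH; first by split=> // i /ltnW; apply: nLk.
have km : k = k %/ d * d by rewrite divnK.
have m1 : 1 < k %/ d.
  rewrite ltn_neqAle eq_sym -(ltn_pmul2r (L_gt0 Ld)) -km k0 andbT.
  by apply: contraPN (nLk n (ltnSn n)) => /eqP m1; rewrite km m1 mul1n.
exists (pdiv (k %/ d) * d).
  by exists (pdiv (k %/ d)), d; rewrite pdiv_prime.
by rewrite [X in _ %| X]km dvdn_mul // pdiv_dvd.
Qed.

Lemma outside_L_divisor_fun n : exists f : nat -> nat,
  forall k, outside_L n k -> L n (f k) /\ f k %| k.
Proof.
suff /choice [f fP] : forall k, exists d, outside_L n k -> L n d /\ d %| k.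
  by exists f.
move=> k; have [/outside_L_divisor [d Ld dk] | nO] := pselect (outside_L n k).
  by exists d.
by exists 0 => /nO.
Qed.

Lemma exists_closure_L_tdiv x n :
  in_I x -> exists y, in_closure (L n) y /\ tdiv y x.
Proof.
move=> x_I; have [x_uf _] := x_I; have xO := I_outside_L n x_I.
have [f fP] := outside_L_divisor_fun n.
exists (push f x); split; first split.
- apply: push_ultrafilter => //.
  by apply: (ultrafilterS x_uf xO) => k /fP [/L_gt0].
- by apply: (ultrafilterS x_uf xO) => k /fP [].
- apply: tdiv_push_divisor => //; apply: (ultrafilterS x_uf xO) => k Ok.
  by split; [case: Ok | case: (fP k Ok)].
Qed.

Theorem theorem3p5 :
  (* (a) *)
  (forall x, in_I x -> forall n : nat, 0 < n ->
     exists y, in_closure (L n) y /\ tdiv y x) /\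
  (* (b) *)
  (forall n : nat, 0 < n -> forall x, in_star (L n) x ->
     exists y, in_I y /\ tdiv x y) /\
  (* (c) *)
  (exists x y, in_I x /\ in_I y /\ tdiv y x).
Proof.
split; first by move=> x x_I n _; apply: exists_closure_L_tdiv.
split.
  move=> n _ x x_star; have [[x_uf _] _] := x_star.
  have x_free := star_free x_star.
  exists (push mul_exp2 x).
  split; first exact: push_mul_exp2_I x_uf x_free.
  exact: tdiv_push_mul_exp2 x_uf x_free.
have [z [z_uf z_free]] := exists_free_ultrafilter.
have y_uf := push_mul_exp2_ultrafilter z_uf z_free.
have y_free := push_mul_exp2_free z_uf z_free.
exists (push mul_exp2 (push mul_exp2 z)), (push mul_exp2 z).
split; first exact: push_mul_exp2_I y_uf y_free.
split; first exact: push_mul_exp2_I z_uf z_free.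
exact: tdiv_push_mul_exp2 y_uf y_free.
Qed.
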